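(* $\mathrm{Tv}(\mathbb{Z} \times \mathbb{R}^k,m) = 2(m-1)(k+1) +1$.
   Context: For $S\subseteq\mathbb{R}^d$ and an integer $m\geq 2$, the Tverberg number $\mathrm{Tv}(S,m)$ is the smallest positive integer $n$ such that any multiset of $n$ points in $S$ admits a partition into $m$ submultisets $A_1,\dots,A_m$ with $\left(\bigcap_{i=1}^m\mathrm{conv}(A_i)\right)\cap S\neq\varnothing$ (and $\mathrm{Tv}(S,m)=\infty$ if no such number exists). Here $k$ is a positive integer and $m\geq 2$. *)

From HB Require Import structures.
From mathcomp Require Import all_boot all_order all_algebra.
From mathcomp Require Import reals.
Set Implicit Arguments. Unset Strict Implicit. Unset Printing Implicit Defensive.
Import Order.TTheory GRing.Theory Num.Theory.
Local Open Scope ring_scope.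

(* A multiset of n points is an
   indexed family p : 'I_n -> 'rV_d (repetitions allowed).  A partition into
   m submultisets is an assignment f : 'I_n -> 'I_m (block j = f^-1(j)). *)

Definition in_conv_block {R : realType} {d n m : nat}
    (p : 'I_n -> 'rV[R]_d) (f : 'I_n -> 'I_m) (j : 'I_m) (x : 'rV[R]_d) : Prop :=
  exists lam : 'I_n -> R,
    (forall i, 0 <= lam i) /\
    (\sum_(i | f i == j) lam i = 1) /\
    x = \sum_(i | f i == j) lam i *: p i.

Definition tverberg_prop {R : realType} {d : nat} (S : 'rV[R]_d -> Prop)
    (m n : nat) : Prop :=
  forall p : 'I_n -> 'rV[R]_d, (forall i, S (p i)) ->
    exists f : 'I_n -> 'I_m, exists x : 'rV[R]_d,
      S x /\ forall j : 'I_m, in_conv_block p f j x.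

Definition Tv_eq {R : realType} {d : nat} (S : 'rV[R]_d -> Prop)
    (m N : nat) : Prop :=
  (0 < N)%N /\ tverberg_prop S m N /\
  forall n : nat, (0 < n)%N -> (n < N)%N -> ~ tverberg_prop S m n.

(* Z x R^k, as a subset of R^(k+1): first coordinate is an integer. *)
Definition ZxR {R : realType} (k : nat) : 'rV[R]_(k.+1) -> Prop :=
  fun x => exists z : int, x ord0 ord0 = z%:~R.

From HB Require Import structures.
From mathcomp Require Import all_boot all_order all_algebra.
From mathcomp Require Import reals.
From mathcomp Require Import classical_sets boolp topology normedtype derive.
From mathcomp Require Import ring lra zify.
Import Order.TTheory GRing.Theory Num.Theory.
Import numFieldNormedType.Exports.
Set Implicit Arguments. Unset Strict Implicit. Unset Printing Implicit Defensive.
Local Open Scope ring_scope.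

(* Sort the N = 2D + 1 points, D = (k + 1)(m - 1), by their integral
   coordinate and pair the i-th smallest with the i-th largest, the median with
   itself.  Each pair spans a segment crossing the hyperplane through the median
   orthogonal to the integral axis; the D + 1 crossing points lie in a copy of R^k,
   so Tverberg's theorem splits them into m parts whose hulls share a point x.
   Replacing every crossing point by the endpoints of its segment partitions the
   original points, and x has the integral coordinate of the median.  Tverberg's
   theorem itself follows from Barany's colourful Caratheodory theorem by
   Sarkaria's tensor lifting, and the colourful theorem from a colourful simplex
   nearest to the origin.

   Take m - 1 copies of each vertex of a k-simplex at heights 0 and 1.
   A Tverberg point of integral height lies at height 0 or 1, so every one of the m
   parts must contain a point of that layer at each vertex where the Tverberg point
   has positive barycentric weight; there are only m - 1 such points. *)

Lemma sum_delta_scale (R : pzRingType) (V : lmodType R) (I : finType) (i : I)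
    (F : I -> V) :
  \sum_j (j == i)%:R *: F j = F i.
Proof.
by rewrite (bigD1 i) //= eqxx scale1r big1 ?addr0 // => j /negbTE ->; rewrite scale0r.
Qed.

Lemma sum_delta_mul (R : pzRingType) (I : finType) (i : I) (F : I -> R) :
  \sum_j (j == i)%:R * F j = F i.
Proof.
by rewrite (bigD1 i) //= eqxx mul1r big1 ?addr0 // => j /negbTE ->; rewrite mul0r.
Qed.

Lemma sum_delta (R : pzRingType) (I : finType) (i : I) : \sum_j ((j == i)%:R : R) = 1.
Proof.
by rewrite -[RHS](sum_delta_mul i (fun=> 1)); apply: eq_bigr => j _; rewrite mulr1.
Qed.

Lemma sum_fiber (V : nmodType) (I J : finType) (pi : I -> J) j (F : I -> V) :
  (forall i, pi i != j -> F i = 0) -> \sum_(i | pi i == j) F i = \sum_i F i.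
Proof.
move=> F0; rewrite big_mkcond /=; apply: eq_bigr => i _.
by case: eqVneq => // /F0.
Qed.

Lemma sum_comp_partition (V : nmodType) (I J K : finType) (pi : I -> J) (g : J -> K) k
    (F : I -> V) :
  \sum_(i | g (pi i) == k) F i = \sum_(j | g j == k) \sum_(i | pi i == j) F i.
Proof.
rewrite (partition_big pi (fun j => g j == k)) //.
apply: eq_bigr => j /eqP gj; apply: eq_bigl => i.
by case: (eqVneq (pi i) j) => [->|]; rewrite ?gj ?eqxx ?andbF.
Qed.

(** * Convex combinations in Euclidean space *)

Section Dot.
Variables (R : realDomainType) (n : nat).
Implicit Types u v w : 'rV[R]_n.

Definition dot u v : R := \sum_c u ord0 c * v ord0 c.
Definition norm2 u : R := dot u u.

Lemma dotC u v : dot u v = dot v u.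
Proof. by apply: eq_bigr => c _; rewrite mulrC. Qed.

Lemma dotDr u v w : dot u (v + w) = dot u v + dot u w.
Proof. by rewrite /dot -big_split; apply: eq_bigr => c _; rewrite mxE mulrDr. Qed.

Lemma dotZr a u v : dot u (a *: v) = a * dot u v.
Proof. by rewrite /dot mulr_sumr; apply: eq_bigr => c _; rewrite mxE mulrCA. Qed.

Lemma dotNr u v : dot u (- v) = - dot u v.
Proof. by rewrite -scaleN1r dotZr mulN1r. Qed.

Lemma dotBr u v w : dot u (v - w) = dot u v - dot u w.
Proof. by rewrite dotDr dotNr. Qed.

Lemma dot0r u : dot u 0 = 0.
Proof. by rewrite /dot big1 // => c _; rewrite mxE mulr0. Qed.

Lemma dot_sumr (I : finType) (F : I -> 'rV[R]_n) u :
  dot u (\sum_i F i) = \sum_i dot u (F i).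
Proof. exact: (big_morph (dot u) (dotDr u) (dot0r u)). Qed.

Lemma norm2_ge0 u : 0 <= norm2 u.
Proof. by apply: sumr_ge0 => c _; rewrite -expr2 sqr_ge0. Qed.

Lemma norm2_eq0 u : (norm2 u == 0) = (u == 0).
Proof.
apply/idP/eqP => [|->]; last by rewrite /norm2 /dot big1 // => c _; rewrite mxE mul0r.
rewrite psumr_eq0 => [/allP u0|c _]; last by rewrite -expr2 sqr_ge0.
apply/rowP => c; rewrite mxE; apply/eqP.
by rewrite -sqrf_eq0 expr2; exact: u0 (mem_index_enum c).
Qed.

Lemma norm2DZ a u v :
  norm2 (u + a *: v) = norm2 u + 2 * a * dot u v + a ^+ 2 * norm2 v.
Proof.
rewrite /norm2 dotDr ![dot (_ + _) _]dotC !dotDr !dotZr ![dot (_ *: _) _]dotC !dotZr.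
ring.
Qed.

End Dot.

Section ConvexComb.
Variable R : realFieldType.

Definition convex_weights (I : finType) (l : I -> R) :=
  (forall i, 0 <= l i) /\ \sum_i l i = 1.

Definition convex_comb (V : lmodType R) (I : finType) (l : I -> R) (t : I -> V) : V :=
  \sum_i l i *: t i.

Lemma convex_weights_segment (I : finType) (l : I -> R) i s :
  convex_weights l -> 0 <= s <= 1 ->
  convex_weights (fun j => (1 - s) * l j + (j == i)%:R * s).
Proof.
move=> [l_ge0 l_sum1] /andP[s_ge0 s_le1]; split => [j|].
  by apply: addr_ge0; apply: mulr_ge0; rewrite ?subr_ge0 ?ler0n.
by rewrite big_split /= -mulr_sumr -mulr_suml l_sum1 sum_delta mulr1 mul1r subrK.
Qed.

Lemma convex_comb_segment (V : lmodType R) (I : finType) (l : I -> R) (t : I -> V) i s :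
  convex_comb (fun j => (1 - s) * l j + (j == i)%:R * s) t =
  convex_comb l t + s *: (t i - convex_comb l t).
Proof.
rewrite /convex_comb; under eq_bigr do rewrite scalerDl -!scalerA.
rewrite big_split /= -!scaler_sumr sum_delta_scale.
by rewrite scalerBl scale1r scalerBr addrAC -addrA.
Qed.

End ConvexComb.

Lemma norm2_convex_comb_descent (R : realFieldType) n (I : finType)
    (t : I -> 'rV[R]_n) l i :
  convex_weights l -> dot (convex_comb l t) (t i) < norm2 (convex_comb l t) ->
  exists2 l', convex_weights l' & norm2 (convex_comb l' t) < norm2 (convex_comb l t).
Proof.
set p := convex_comb l t => wl ti_lt.
pose a := norm2 p - dot p (t i); pose b := norm2 (t i - p).
have a_gt0 : 0 < a by rewrite subr_gt0.
have b_ge0 : 0 <= b := norm2_ge0 _.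
have ab_gt0 : 0 < a + b by exact: ltr_wpDr.
(* The step [s] minimizes [norm2 (p + s *: (t i - p)) = norm2 p - 2 s a + s^2 b]. *)
pose s := a / (a + b).
have s_gt0 : 0 < s by exact: divr_gt0.
have s_le1 : s <= 1 by rewrite ler_pdivrMr // mul1r lerDl.
have sb_le_a : s * b <= a by rewrite mulrAC ler_pdivrMr // ler_pM2l // lerDr ltW.
exists (fun j => (1 - s) * l j + (j == i)%:R * s).
  by apply: convex_weights_segment; rewrite // ltW.
rewrite convex_comb_segment -/p norm2DZ dotBr -/(norm2 p).
have -> : dot p (t i) - norm2 p = - a by rewrite opprB.
have : s ^+ 2 * b <= s * a by rewrite expr2 -mulrA ler_pM2l.
have : 0 < s * a by exact: mulr_gt0.
rewrite -/b; lra.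
Qed.

Lemma convex_comb_affine_dependence (R : realFieldType) (V : lmodType R)
    (I : finType) (t : I -> V) (l mu : I -> R) :
  convex_weights l -> \sum_i mu i *: t i = 0 -> \sum_i mu i = 0 ->
  (exists i, mu i != 0) ->
  exists l', [/\ convex_weights l', convex_comb l' t = convex_comb l t
               & exists i, l' i = 0].
Proof.
move=> [l_ge0 l_sum1] mu_t mu_sum [i1 mu_i1].
have [i2 mu_i2] : exists i, 0 < mu i.
  apply/existsP; apply: contraT; rewrite negb_exists => /forallP mu_le0.
  have : \sum_i - mu i == 0 by rewrite sumrN mu_sum oppr0.
  rewrite psumr_eq0 => [/allP/(_ i1 (mem_index_enum _))|i _].
    by rewrite oppr_eq0 (negbTE mu_i1).
  by rewrite oppr_ge0 leNgt mu_le0.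
(* Move along [-mu] until the first weight vanishes. *)
have [i0 mu_i0 i0_min] :=
  @arg_minP _ _ _ i2 (fun i => 0 < mu i) (fun i => l i / mu i) mu_i2.
pose s := l i0 / mu i0.
exists (fun i => l i - s * mu i); split.
- split => [i|]; last by rewrite sumrB -mulr_sumr mu_sum mulr0 subr0.
  rewrite subr_ge0; have [mu_i_gt0|mu_i_le0] := ltP 0 (mu i).
    by rewrite -ler_pdivlMr //; exact: i0_min.
  apply: le_trans _ (l_ge0 i); apply: mulr_ge0_le0 => //.
  by apply: divr_ge0 => //; exact: ltW.
- rewrite /convex_comb; under eq_bigr do rewrite scalerBl -scalerA.
  by rewrite sumrB -scaler_sumr mu_t scaler0 subr0.
- by exists i0; rewrite /s divfK ?subrr ?gt_eqF.
Qed.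

Lemma rV_linear_dependence (F : fieldType) n (t : 'I_n.+1 -> 'rV[F]_n) :
  exists2 mu : 'I_n.+1 -> F, exists i, mu i != 0 & \sum_i mu i *: t i = 0.
Proof.
pose T := \matrix_i t i.
have : kermx T != 0.
  rewrite kermx_eq0 /row_free; apply: contraTneq (rank_leq_col T) => ->.
  by rewrite ltnn.
case/rowV0Pn => v /sub_kermxP vT v_neq0.
exists (fun i => v ord0 i).
  apply/existsP; apply: contraNT v_neq0; rewrite negb_exists => /forallP v0.
  by apply/eqP/rowP => i; rewrite mxE; apply/eqP/negPn/v0.
by rewrite -[RHS]vT mulmx_sum_row; apply: eq_bigr => i _; rewrite rowK.
Qed.

Section MinimalNorm.
Variables (R : realType) (n : nat).
Local Open Scope classical_set_scope.

Lemma continuous_sum (T : topologicalType) (I : Type) (r : seq I) (F : I -> T -> R) :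
  (forall i, continuous (F i)) -> continuous (fun x => \sum_(i <- r) F i x).
Proof. by move=> F_cont; apply: (@continuous_big _ _ _ _ predT add_continuous). Qed.

Lemma compact_convex_weights K :
  compact [set v : 'rV[R]_K | convex_weights (fun i => v ord0 i)].
Proof.
apply: (@subclosed_compact _ _ [set v : 'rV[R]_K | forall i, `[0 : R, 1] (v ord0 i)]).
- have -> : [set v : 'rV[R]_K | convex_weights (fun i => v ord0 i)] =
      \bigcap_i [set v : 'rV[R]_K | 0 <= v ord0 i] `&`
      (fun v : 'rV[R]_K => \sum_i v ord0 i) @^-1` [set 1].
    apply/seteqP; split => v [v_ge0 v_sum1]; split => // i; last by apply: v_ge0.
    by move=> _; exact: v_ge0.
  apply: closedI.
    apply: closed_bigI => i _.
    apply: (@preimage_closed _ _ (fun v : 'rV[R]_K => v ord0 i) [set x | 0 <= x]).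
      by move=> v _; exact: coord_continuous.
    exact: closed_ge.
  have sum_cont : continuous (fun v : 'rV[R]_K => \sum_i v ord0 i).
    by apply: continuous_sum => i; exact: coord_continuous.
  apply: (@preimage_closed _ _ (fun v : 'rV[R]_K => \sum_i v ord0 i) [set 1]).
    by move=> v _; exact: sum_cont.
  exact: closed_eq.
- by apply: (@rV_compact _ _ (fun=> `[0 : R, 1])) => i; exact: segment_compact.
- move=> v [v_ge0 v_sum1] i /=; rewrite in_itv /= v_ge0 -v_sum1.
  by rewrite (bigD1 i) //= lerDl sumr_ge0.
Qed.

Lemma continuous_norm2_convex_comb K (t : 'I_K -> 'rV[R]_n) :
  continuous (fun v : 'rV[R]_K => norm2 (convex_comb (fun i => v ord0 i) t)).
Proof.
pose coord c (v : 'rV[R]_K) := \sum_i v ord0 i * t i ord0 c.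
have coord_cont c : continuous (coord c).
  apply: continuous_sum => i v.
  by apply: continuousM; [exact: coord_continuous | exact: cst_continuous].
have -> : (fun v : 'rV[R]_K => norm2 (convex_comb (fun i => v ord0 i) t)) =
          (fun v : 'rV[R]_K => \sum_c coord c v * coord c v).
  apply: funext => v; apply: eq_bigr => c _.
  by rewrite /convex_comb summxE; under eq_bigr do rewrite mxE.
by apply: continuous_sum => c v; apply: continuousM; exact: coord_cont.
Qed.

Lemma convex_comb_norm2_min K (t : 'I_K.+1 -> 'rV[R]_n) :
  exists2 l, convex_weights l &
    forall l', convex_weights l' -> norm2 (convex_comb l t) <= norm2 (convex_comb l' t).
Proof.
have simplex0 : [set v : 'rV[R]_K.+1 | convex_weights (fun i => v ord0 i)] !=set0.
  exists (\row_i (i == ord0)%:R); split => [i|]; first by rewrite mxE ler0n.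
  by rewrite (bigD1 ord0) //= !mxE eqxx big1 ?addr0 // => i /negbTE; rewrite mxE => ->.
have [v /[!inE] wv v_min] := EVT_min_rV simplex0 (@compact_convex_weights K.+1)
  (continuous_subspaceT (@continuous_norm2_convex_comb K.+1 t)).
exists (fun i => v ord0 i) => // l wl.
have row_l : (fun i => (\row_j l j) ord0 i) = l by apply: funext => i; rewrite mxE.
by have := v_min (\row_i l i); rewrite inE /= row_l; apply.
Qed.

End MinimalNorm.

(** * The colourful Caratheodory and Tverberg theorems *)

Lemma convex_comb_drop_vertex (R : realFieldType) D (t : 'I_D.+1 -> 'rV[R]_D) l :
  convex_weights l -> convex_comb l t != 0 ->
  (forall i, norm2 (convex_comb l t) <= dot (convex_comb l t) (t i)) ->
  exists l', [/\ convex_weights l', convex_comb l' t = convex_comb l t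
               & exists i, l' i = 0].
Proof.
set p := convex_comb l t => wl p_neq0 p_supp.
case: (boolP [exists i, l i == 0]) => [/existsP[i /eqP li0]|/existsPn l_neq0].
  by exists l; split => //; exists i.
have [l_ge0 l_sum1] := wl.
have norm2p_neq0 : norm2 p != 0 by rewrite norm2_eq0.
(* Every [t i] carries positive weight, so lies on the hyperplane [dot p x = norm2 p]. *)
have t_on_hyperplane i : dot p (t i) = norm2 p.
  have : \sum_i l i * (dot p (t i) - norm2 p) == 0.
    under eq_bigr do rewrite mulrBr.
    rewrite sumrB -mulr_suml l_sum1 mul1r subr_eq0 /norm2 {3}/p /convex_comb dot_sumr.
    by under [X in _ == X]eq_bigr do rewrite dotZr.
  rewrite psumr_eq0 => [/allP/(_ i (mem_index_enum _))|j _].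
    by rewrite mulf_eq0 (negbTE (l_neq0 i)) subr_eq0 => /eqP.
  by apply: mulr_ge0; rewrite ?subr_ge0.
have [mu mu_neq0 mu_t] := rV_linear_dependence t.
apply: (convex_comb_affine_dependence wl mu_t _ mu_neq0).
apply/eqP; rewrite -(mulIr_eq0 _ (mulIf norm2p_neq0)) mulr_suml.
under eq_bigr => i _ do rewrite -(t_on_hyperplane i) -dotZr.
by rewrite -dot_sumr mu_t dot0r.
Qed.

Lemma colorful_caratheodory (R : realType) D K (c : 'I_D.+1 -> 'I_K.+1 -> 'rV[R]_D) :
  (forall i, exists2 mu, convex_weights mu & convex_comb mu (c i) = 0) ->
  exists g : 'I_D.+1 -> 'I_K.+1,
    exists2 l, convex_weights l & convex_comb l (fun i => c i (g i)) = 0.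
Proof.
move=> c_zero.
pose pts (g : {ffun 'I_D.+1 -> 'I_K.+1}) i := c i (g i).
have /choice[lmin lminP] (g : {ffun 'I_D.+1 -> 'I_K.+1}) :
    exists l, convex_weights l /\ forall l', convex_weights l' ->
      norm2 (convex_comb l (pts g)) <= norm2 (convex_comb l' (pts g)).
  by have [l] := convex_comb_norm2_min (pts g); exists l.
pose dist g := norm2 (convex_comb (lmin g) (pts g)).
(* Take a colourful choice [g0] whose hull is closest to the origin. *)
have [g0 _ g0_min] := @arg_minP _ _ _ [ffun=> ord0] predT dist isT.
have [wl0 l0_min] := lminP g0.
set p := convex_comb (lmin g0) (pts g0) in l0_min.
have [p0|p_neq0] := eqVneq p 0; first by exists g0, (lmin g0).
have p_supp i : norm2 p <= dot p (pts g0 i).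
  rewrite leNgt; apply/negP => /(norm2_convex_comb_descent wl0) [l' wl'].
  by rewrite ltNge l0_min.
have [l' [wl' l'_p [i0 l'_i0]]] := convex_comb_drop_vertex wl0 p_neq0 p_supp.
(* Recolour [i0] by a point of its class on the origin's side of the hyperplane. *)
have [jm _ jm_min] := @arg_minP _ _ _ ord0 predT (fun j => dot p (c i0 j)) isT.
have jm_le0 : dot p (c i0 jm) <= 0.
  have [mu [mu_ge0 mu_sum1] mu_c] := c_zero i0.
  rewrite -(dot0r p) -mu_c dot_sumr -[X in X <= _]mul1r -mu_sum1 mulr_suml.
  by apply: ler_sum => j _; rewrite dotZr ler_wpM2l ?jm_min.
pose g' := [ffun i => if i == i0 then jm else g0 i].
have p_g' : convex_comb l' (pts g') = p.
  rewrite -[RHS]l'_p; apply: eq_bigr => i _; rewrite /pts ffunE.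
  by case: eqVneq => [->|//]; rewrite l'_i0 !scale0r.
have [l'' wl''] : exists2 l'', convex_weights l'' &
    norm2 (convex_comb l'' (pts g')) < norm2 p.
  rewrite -p_g'; apply: (norm2_convex_comb_descent (i := i0) wl').
  rewrite p_g' /pts ffunE eqxx; apply: le_lt_trans jm_le0 _.
  by rewrite lt_def norm2_ge0 norm2_eq0 p_neq0.
by rewrite ltNge (le_trans (g0_min g' isT) ((lminP g').2 l'' wl'')).
Qed.

(* [e_0, ..., e_(m'-1)] and [-(e_0 + ... + e_(m'-1))]: a simplex centred at 0. *)
Definition simplex_vertex (R : pzRingType) m' (j : 'I_m'.+1) : 'rV[R]_m' :=
  \row_s ((j == widen_ord (leqnSn m') s)%:R - (j == ord_max)%:R).

Section SimplexVertex.
Variables (R : comPzRingType) (m' : nat).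

Lemma sum_simplex_vertex : \sum_(j < m'.+1) simplex_vertex R j = 0.
Proof.
apply/rowP => s; rewrite summxE mxE; under eq_bigr do rewrite mxE.
by rewrite sumrB !sum_delta subrr.
Qed.

Lemma simplex_vertex_mx_eq0 d (U : 'I_m'.+1 -> 'rV[R]_d) :
  \sum_j (U j)^T *m simplex_vertex R j = 0 -> forall j, U j = U ord_max.
Proof.
move=> /matrixP sum0 j; have [j_lt|j_ge] := ltnP j m'; last first.
  by congr U; apply/val_inj/eqP; rewrite /= eqn_leq j_ge -ltnS ltn_ord.
apply/rowP => r; have := sum0 r (Ordinal j_lt); rewrite summxE mxE.
under eq_bigr do rewrite mxE big_ord1 !mxE mulrC mulrBl.
rewrite sumrB !sum_delta_mul => /eqP; rewrite subr_eq0 => /eqP.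
by have -> : widen_ord (leqnSn m') (Ordinal j_lt) = j by apply: val_inj.
Qed.

End SimplexVertex.

Lemma tverberg_hyperplane1 (R : realType) d m' r0 (a : 'I_(d * m').+1 -> 'rV[R]_d) :
  (forall i, a i ord0 r0 = 1) ->
  exists f : 'I_(d * m').+1 -> 'I_m'.+1,
    exists2 x : 'rV[R]_d, x ord0 r0 = 1 & forall j, in_conv_block a f j x.
Proof.
move=> a_r0.
(* Sarkaria's lifting; each colour class [c i] has barycentre 0 by [sum_simplex_vertex]. *)
pose c i (j : 'I_m'.+1) := mxvec ((a i)^T *m simplex_vertex R j).
have [g [l [l_ge0 l_sum1] l_c]] : exists g : 'I_(d * m').+1 -> 'I_m'.+1,
    exists2 l, convex_weights l & convex_comb l (fun i => c i (g i)) = 0.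
  apply: colorful_caratheodory => i; exists (fun=> (m'.+1)%:R^-1).
    split=> [_|]; first by rewrite invr_ge0 ler0n.
    by rewrite sumr_const card_ord -[LHS]mulr_natr mulVf ?pnatr_eq0.
  rewrite /convex_comb -scaler_sumr /c -linear_sum -mulmx_sumr sum_simplex_vertex.
  by rewrite mulmx0 linear0 scaler0.
pose U j := \sum_(i | g i == j) l i *: a i.
have U_eq j : U j = U ord_max.
  apply: simplex_vertex_mx_eq0; apply: (can_inj mxvecK); rewrite linear0 -[RHS]l_c.
  rewrite /convex_comb (partition_big g predT) //= linear_sum; apply: eq_bigr => j' _.
  rewrite /U linear_sum mulmx_suml linear_sum; apply: eq_bigr => i /eqP <-.
  by rewrite !linearZ /= -scalemxAl linearZ.
have U_sum : \sum_j U j ord0 r0 = 1.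
  rewrite -l_sum1 (partition_big g predT) //=; apply: eq_bigr => j _.
  by rewrite summxE; apply: eq_bigr => i _; rewrite mxE a_r0 mulr1.
have U_r0 : (m'.+1)%:R * U ord_max ord0 r0 = 1.
  rewrite -[RHS]U_sum; under eq_bigr do rewrite U_eq.
  by rewrite sumr_const card_ord mulr_natl.
exists g, ((m'.+1)%:R *: U ord_max); first by rewrite mxE.
move=> j; exists (fun i => (m'.+1)%:R * l i); split; [|split].
- by move=> i; rewrite mulr_ge0 ?ler0n.
- rewrite -mulr_sumr -[RHS]U_r0 -(U_eq j) summxE; congr (_ * _).
  by apply: eq_bigr => i _; rewrite mxE a_r0 mulr1.
- by rewrite -(U_eq j) scaler_sumr; apply: eq_bigr => i _; rewrite scalerA.
Qed.

Lemma in_conv_block_translate (R : realType) d n m (a : 'I_n -> 'rV[R]_d)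
    (f : 'I_n -> 'I_m) j x v :
  in_conv_block (fun i => a i + v) f j x -> in_conv_block a f j (x - v).
Proof.
move=> [lam [lam_ge0 [lam_sum1 ->]]]; exists lam; do 2!split => //.
under eq_bigr do rewrite scalerDr.
by rewrite big_split /= -scaler_suml lam_sum1 scale1r addrK.
Qed.

Lemma tverberg_hyperplane (R : realType) d m' r0 c (a : 'I_(d * m').+1 -> 'rV[R]_d) :
  (forall i, a i ord0 r0 = c) ->
  exists f : 'I_(d * m').+1 -> 'I_m'.+1,
    exists2 x : 'rV[R]_d, x ord0 r0 = c & forall j, in_conv_block a f j x.
Proof.
move=> a_r0; pose v : 'rV[R]_d := (1 - c) *: \row_s (s == r0)%:R.
have [|f [x x_r0 x_conv]] := @tverberg_hyperplane1 R d m' r0 (fun i => a i + v).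
  by move=> i; rewrite !mxE a_r0 eqxx mulr1 addrC subrK.
exists f, (x - v) => [|j]; last exact: in_conv_block_translate.
by rewrite !mxE x_r0 eqxx mulr1 opprB addrC subrK.
Qed.

(** * The upper bound *)

Lemma median_pairing disp (T : orderType disp) D (z : 'I_(D + D).+1 -> T) :
  exists (pi : 'I_(D + D).+1 -> 'I_D.+1) (lo hi : 'I_D.+1 -> 'I_(D + D).+1)
         (t0 : 'I_(D + D).+1),
    forall i, [/\ (z (lo i) <= z t0 <= z (hi i))%O, pi (lo i) = i & pi (hi i) = i].
Proof.
pose r a b := (z a <= z b)%O.
pose s := sort r (enum 'I_(D + D).+1).
have s_size : size s = (D + D).+1 by rewrite size_sort size_enum_ord.
have s_uniq : uniq s by rewrite sort_uniq enum_uniq.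
have s_mono i j :
    (i <= j < (D + D).+1)%N -> (z (nth ord0 s i) <= z (nth ord0 s j))%O.
  have r_trans : transitive r by move=> ? ? ?; exact: le_trans.
  have r_refl : reflexive r by move=> ?; exact: lexx.
  have s_sorted : sorted r s by apply: sort_sorted => a b; exact: le_total.
  case/andP=> ij jN; apply: (sorted_leq_nth r_trans r_refl) => //; rewrite inE s_size //.
  exact: leq_ltn_trans ij jN.
(* The i-th smallest and the i-th largest points form the pair [i]. *)
pose pi l := let q := index l s in
  if (q <= D)%N then inord q : 'I_D.+1 else inord (D + D - q).
exists pi, (fun i => nth ord0 s i), (fun i => nth ord0 s (D + D - i)), (nth ord0 s D).
move=> i; have iD : (i <= D)%N by rewrite -ltnS.
have idx j : (j < (D + D).+1)%N -> index (nth ord0 s j) s = j.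
  by move=> jN; rewrite index_uniq ?s_size.
split; first by rewrite !s_mono //; lia.
  by rewrite /pi idx ?iD; [apply: val_inj; rewrite /= inordK | lia].
rewrite /pi idx; last by lia.
by case: ifP => cond; apply: val_inj; rewrite /= inordK; lia.
Qed.

Lemma segment_level (R : realFieldType) (a b t : R) :
  a <= t <= b -> exists2 al, 0 <= al <= 1 & al * a + (1 - al) * b = t.
Proof.
case/andP=> a_le_t t_le_b; have [ab|ab] := eqVneq a b.
  exists 1; first by rewrite ler01 lexx.
  by rewrite mul1r subrr mul0r addr0; apply/eqP; rewrite eq_le a_le_t ab t_le_b.
have ba_gt0 : 0 < b - a by rewrite subr_gt0 lt_neqAle ab (le_trans a_le_t).
exists ((b - t) / (b - a)).
  apply/andP; split; first by apply: divr_ge0; [rewrite subr_ge0 | exact: ltW].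
  by rewrite ler_pdivrMr // mul1r lerD2l lerN2.
by field; rewrite gt_eqF.
Qed.

Lemma segment_in_conv_block (R : realType) d n M (p : 'I_n -> 'rV[R]_d)
    (pi : 'I_n -> 'I_M) i a b al :
  pi a = i -> pi b = i -> 0 <= al <= 1 ->
  in_conv_block p pi i (al *: p a + (1 - al) *: p b).
Proof.
move=> pi_a pi_b /andP[al_ge0 al_le1].
pose W l := (l == a)%:R * al + (l == b)%:R * (1 - al).
have W0 l : pi l != i -> W l = 0.
  move=> pi_l; rewrite /W !(introF eqP) ?mul0r ?addr0 // => l_eq.
    by move: pi_l; rewrite l_eq pi_b eqxx.
  by move: pi_l; rewrite l_eq pi_a eqxx.
exists W; split; [|split].
- by move=> l; rewrite addr_ge0 ?mulr_ge0 ?ler0n ?subr_ge0.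
- by rewrite sum_fiber // big_split /= !sum_delta_mul addrC subrK.
- rewrite sum_fiber => [|l /W0 ->]; last by rewrite scale0r.
  under eq_bigr do rewrite scalerDl -!scalerA.
  by rewrite big_split /= !sum_delta_scale.
Qed.

Lemma in_conv_block_comp (R : realType) d n M m (p : 'I_n -> 'rV[R]_d)
    (pi : 'I_n -> 'I_M) (y : 'I_M -> 'rV[R]_d) (g : 'I_M -> 'I_m) j x :
  (forall i, in_conv_block p pi i (y i)) -> in_conv_block y g j x ->
  in_conv_block p (fun l => g (pi l)) j x.
Proof.
move=> /choice[W W_conv] [lam [lam_ge0 [lam_sum1 ->]]].
exists (fun l => lam (pi l) * W (pi l) l); split; [|split].
- by move=> l; rewrite mulr_ge0 ?(W_conv _).1.
- rewrite sum_comp_partition -[RHS]lam_sum1; apply: eq_bigr => i _.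
  have [_ [W_sum1 _]] := W_conv i.
  by rewrite -[RHS]mulr1 -[X in _ * X]W_sum1 mulr_sumr; apply: eq_bigr => l /eqP ->.
- rewrite [RHS]sum_comp_partition; apply: eq_bigr => i _.
  have [_ [_ ->]] := W_conv i.
  by rewrite scaler_sumr; apply: eq_bigr => l /eqP ->; rewrite scalerA.
Qed.

Lemma tverberg_prop_ZxR (R : realType) k m' :
  tverberg_prop (@ZxR R k) m'.+1 (k.+1 * m' + k.+1 * m').+1.
Proof.
move=> p p_ZxR.
have [pi [lo [hi [t0 pair]]]] := median_pairing (fun l => p l ord0 ord0).
pose t := p t0 ord0 ord0.
have /choice[al al_P] i : exists al, 0 <= al <= 1 /\
    al * p (lo i) ord0 ord0 + (1 - al) * p (hi i) ord0 ord0 = t.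
  by have [z_le _ _] := pair i; have [al] := segment_level z_le; exists al.
pose y i := al i *: p (lo i) + (1 - al i) *: p (hi i).
have y_conv i : in_conv_block p pi i (y i).
  by have [_ pi_lo pi_hi] := pair i; exact: segment_in_conv_block (al_P i).1.
have y_t i : y i ord0 ord0 = t by rewrite !mxE (al_P i).2.
have [g [x x_t x_conv]] := tverberg_hyperplane y_t.
exists (fun l => g (pi l)), x; split; last by move=> j; exact: in_conv_block_comp.
by have [z t_z] := p_ZxR t0; exists z; rewrite x_t.
Qed.

(** * The lower bound *)

Lemma convex_mean_eq_lbound (R : realDomainType) (I : finType) (P : pred I)
    (lam h : I -> R) c l :
  (forall i, P i -> c <= h i) -> (forall i, 0 <= lam i) -> \sum_(i | P i) lam i = 1 ->
  \sum_(i | P i) lam i * h i = c -> P l -> 0 < lam l -> h l = c.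
Proof.
move=> h_ge lam_ge0 lam_sum1 comb_c Pl lam_l.
have : \sum_(i | P i) lam i * (h i - c) == 0.
  under eq_bigr do rewrite mulrBr.
  by rewrite sumrB -mulr_suml lam_sum1 mul1r comb_c subrr.
rewrite psumr_eq0 => [/allP/(_ l (mem_index_enum l))|i Pi]; last first.
  by rewrite mulr_ge0 ?subr_ge0 ?h_ge.
by rewrite Pl mulf_eq0 gt_eqF //= subr_eq0 => /eqP.
Qed.

(* Vertex [q.2] of the simplex [0, e_1, ..., e_k] of [R^k], placed at height [q.1]. *)
Definition layered_vertex (R : pzRingType) k (q : bool * 'I_k.+1) : 'rV[R]_k.+1 :=
  \row_c (if c == ord0 then q.1%:R else (q.2 == c)%:R).

(* Barycentric coordinates of the last [k] coordinates of [x] in that simplex. *)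
Definition layered_bary (R : pzRingType) k (x : 'rV[R]_k.+1) (v : 'I_k.+1) : R :=
  if v == ord0 then 1 - \sum_(w | w != ord0) x ord0 w else x ord0 v.

Lemma sum_layered_bary (R : pzRingType) k (x : 'rV[R]_k.+1) :
  \sum_v layered_bary x v = 1.
Proof.
rewrite (bigD1 ord0) //= {1}/layered_bary eqxx.
rewrite (eq_bigr (fun v => x ord0 v)) ?subrK // => v /negbTE v_neq0.
by rewrite /layered_bary v_neq0.
Qed.

Section LayeredBlock.
Variables (R : realType) (k m' n : nat) (e : 'I_n -> (bool * 'I_k.+1) * 'I_m').
Variables (f : 'I_n -> 'I_m'.+1) (x : 'rV[R]_k.+1) (j : 'I_m'.+1) (lam : 'I_n -> R).
Hypotheses (lam_ge0 : forall l, 0 <= lam l) (lam_sum1 : \sum_(l | f l == j) lam l = 1).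
Hypothesis x_comb : x = \sum_(l | f l == j) lam l *: layered_vertex R (e l).1.

Lemma layered_height : x ord0 ord0 = \sum_(l | f l == j) lam l * (e l).1.1%:R.
Proof. by rewrite x_comb summxE; apply: eq_bigr => l _; rewrite !mxE eqxx. Qed.

Lemma layered_height01 : ZxR x -> x ord0 ord0 = 0 \/ x ord0 ord0 = 1.
Proof.
case=> z x_z; have : 0 <= x ord0 ord0 <= 1.
  rewrite layered_height sumr_ge0 => [|l _]; last by rewrite mulr_ge0 ?ler0n.
  rewrite -[X in _ <= X]lam_sum1 ler_sum // => l _.
  by rewrite ler_piMr //; case: (e l).1.1; rewrite ?ler01 ?lexx.
rewrite x_z ler0z lerz1 => z01.
have [->|->] : z = 0 \/ z = 1 by lia.
  by left.
by right.
Qed.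

Lemma layered_vertex_weight v :
  \sum_(l | (f l == j) && ((e l).1.2 == v)) lam l = layered_bary x v.
Proof.
have coord w : w != ord0 -> \sum_(l | (f l == j) && ((e l).1.2 == w)) lam l = x ord0 w.
  move=> w_neq0; rewrite x_comb summxE big_mkcondr /=; apply: eq_bigr => l _.
  by rewrite !mxE (negbTE w_neq0); case: eqP; rewrite ?mulr1 ?mulr0.
rewrite /layered_bary; case: eqVneq => [->|]; last exact: coord.
rewrite -[X in X - _]lam_sum1.
rewrite [X in X - _](partition_big (fun l => (e l).1.2) predT) //=.
by rewrite [X in X - _](bigD1 ord0) //= [X in _ + X - _](eq_bigr _ coord) addrK.
Qed.

Lemma layered_height_support l :
  x ord0 ord0 = 0 \/ x ord0 ord0 = 1 -> f l == j -> 0 < lam l ->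
  (e l).1.1%:R = x ord0 ord0.
Proof.
move=> x01 fl lam_l; have x0 := layered_height.
(* [x] lies on the bottom or top face of the slab, so its support does too. *)
case: x01 => x_face; rewrite x_face in x0 *.
  by apply: (convex_mean_eq_lbound _ lam_ge0 lam_sum1 (esym x0)).
apply/eqP; rewrite -eqr_opp; apply/eqP.
apply: (convex_mean_eq_lbound (h := fun i => - (e i).1.1%:R) _ lam_ge0 lam_sum1 _ fl lam_l).
- by move=> i _; rewrite lerN2; case: (e i).1.1; rewrite ?ler01 ?lexx.
- by under eq_bigr do rewrite mulrN; rewrite sumrN -x0.
Qed.

End LayeredBlock.

Lemma layered_no_integral_tverberg_point (R : realType) k m' n
    (e : 'I_n -> (bool * 'I_k.+1) * 'I_m') (f : 'I_n -> 'I_m'.+1) (x : 'rV[R]_k.+1) :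
  injective e -> (forall j, in_conv_block (fun l => layered_vertex R (e l).1) f j x) ->
  ~ ZxR x.
Proof.
move=> e_inj /choice[lam lam_P] x_ZxR.
have [lam0_ge0 [lam0_sum1 x_comb0]] := lam_P ord0.
have x01 := layered_height01 lam0_ge0 lam0_sum1 x_comb0 x_ZxR.
have [v0 bary_v0] : exists v, 0 < layered_bary x v.
  apply/existsP; apply: contraT; rewrite negb_exists => /forallP bary_le0.
  have : \sum_v layered_bary x v <= 0.
    by rewrite sumr_le0 // => v _; rewrite leNgt bary_le0.
  by rewrite sum_layered_bary ler10.
(* Each block gives vertex [v0] the weight [layered_bary x v0 > 0]. *)
have /choice[h h_P] j' :
    exists l, [/\ f l = j', (e l).1.2 = v0 & (e l).1.1%:R = x ord0 ord0].
  have [lam_ge0 [lam_sum1 x_comb]] := lam_P j'.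
  move: bary_v0; rewrite -(layered_vertex_weight lam_sum1 x_comb) lt_def psumr_neq0 //.
  case/andP=> /hasP[l _ /andP[/andP[/eqP fl /eqP el] lam_l]] _; exists l; split=> //.
  by apply: (layered_height_support lam_ge0 lam_sum1 x_comb x01 _ lam_l); rewrite fl.
have h_inj : injective (fun j => (e (h j)).2).
  move=> j1 j2 /= e2; have [f1 v1 b1] := h_P j1; have [f2 v2 b2] := h_P j2.
  rewrite -f1 -f2; congr f; apply: e_inj.
  have e11 : (e (h j1)).1.1 = (e (h j2)).1.1.
    move: b1 b2 => <- /eqP; rewrite eqr_nat.
    by case: (e (h j1)).1.1 (e (h j2)).1.1 => [] [].
  by rewrite [e (h j1)]surjective_pairing [e (h j2)]surjective_pairing e2
    [(e (h j1)).1]surjective_pairing [(e (h j2)).1]surjective_pairing e11 v1 v2.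
by have := leq_card _ h_inj; rewrite !card_ord ltnn.
Qed.

Lemma not_tverberg_prop_ZxR (R : realType) k m' n :
  (n <= 2 * (k.+1 * m'))%N -> ~ tverberg_prop (@ZxR R k) m'.+1 n.
Proof.
move=> n_le tv; pose T := ((bool * 'I_k.+1) * 'I_m')%type.
have n_le_T : (n <= #|{: T}|)%N by rewrite !card_prod card_bool !card_ord -mulnA.
pose e l : T := enum_val (widen_ord n_le_T l).
have e_inj : injective e by move=> l1 l2 /enum_val_inj[] /val_inj.
have p_ZxR l : ZxR (layered_vertex R (e l).1).
  by rewrite /ZxR mxE eqxx; case: (e l).1.1; [exists 1 | exists 0].
have [f [x [x_ZxR x_conv]]] := tv _ p_ZxR.
exact: layered_no_integral_tverberg_point e_inj x_conv x_ZxR.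
Qed.

Theorem mainTheorem6 (R : realType) (k m : nat) :
  (0 < k)%N -> (2 <= m)%N ->
  Tv_eq (@ZxR R k) m (2 * (m - 1) * (k + 1) + 1).
Proof.
case: m => [|m'] // _ _.
have -> : (2 * (m'.+1 - 1) * (k + 1) + 1 = (k.+1 * m' + k.+1 * m').+1)%N.
  by rewrite subn1 /=; nia.
split=> //; split; first exact: tverberg_prop_ZxR.
by move=> n _ n_lt; apply: not_tverberg_prop_ZxR; lia.
Qed.
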